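(* Let $X$ be a compact metric space, $f:X\to X$ a continuous minimal map, $H$ the homeo-part of $f$, and $P$ a residual subset of $X$. Then there is a set $R\subseteq X$ such that (1) $R\subseteq P\cap H$ and $R$ is residual in $X$; (2) $f(R)=R=f^{-1}(R)$; (3) both $f|_R$ and $(f|_R)^{-1}$ are minimal homeomorphisms $R\to R$.
   Context: Minimal: every forward orbit dense (for the compact space $X$, equivalently no proper nonempty closed invariant subset); for the (possibly non-compact) $R$, minimality of a map means every forward orbit is dense in $R$. Homeo-part of $f$: the set $H$ of all $x_0\in X$ whose full orbit $\{x\in X:\exists i,j\ge0,\ f^i(x)=f^j(x_0)\}$ has the form $\{\dots,x_{-1},x_0,x_1,\dots\}$ with $f(x_n)=x_{n+1}$ for all integers $n$. Residual: complement of a countable union of nowhere dense sets. *)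

From HB Require Import structures.
From mathcomp Require Import all_boot all_order all_algebra.
From mathcomp Require Import all_classical all_reals all_analysis.
Set Implicit Arguments. Unset Strict Implicit. Unset Printing Implicit Defensive.
Import Order.TTheory GRing.Theory Num.Theory.
Local Open Scope classical_set_scope.
Local Open Scope ring_scope.

Definition forward_orbit {T : Type} (f : T -> T) (x : T) : set T :=
  range (fun n : nat => iter n f x).

Definition minimal_map {T : topologicalType} (f : T -> T) : Prop :=
  forall x : T, dense (forward_orbit f x).

(* minimality of the map f restricted to A (with the subspace topology):
   every forward orbit of a point of A is dense in A, i.e. meets every
   nonempty relatively open subset O `&` A of A. *)
Definition minimal_on {T : topologicalType} (A : set T) (f : T -> T) : Prop :=
  forall x : T, A x ->
    forall O : set T, open O -> O `&` A !=set0 -> O `&` forward_orbit f x !=set0.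

Definition full_orbit {T : Type} (f : T -> T) (x0 : T) : set T :=
  [set x | exists i j : nat, iter i f x = iter j f x0].

Definition homeo_part {T : Type} (f : T -> T) : set T :=
  [set x0 | exists s : int -> T,
      [/\ s 0%R = x0, (forall n : int, f (s n) = s (n + 1)%R)
        & full_orbit f x0 = range s]].

Definition nowhere_dense {T : topologicalType} (A : set T) : Prop :=
  interior (closure A) = set0.

Definition residual {T : topologicalType} (P : set T) : Prop :=
  exists F : nat -> set T, (forall n, nowhere_dense (F n)) /\
    P = ~` \bigcup_n F n.

(* f is onto, and a closed set containing a backward f-orbit is all of X (the
   forward orbit of a cluster point of the backward orbit stays in it).  Hence
   a closed set whose image contains a dense set is X, which shows that images
   and preimages of nowhere dense sets are nowhere dense.  So is the set of
   points having two preimages at distance >= 1/(n+1).  The points whose full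
   orbit avoids all these sets and the complement of P form a residual
   f-invariant set R.  On R, f is injective along orbits (so R lies in the
   homeo-part), and any right inverse g of f is continuous at points with a
   single preimage, by compactness.  Forward orbits of g are backward orbits
   of f, hence dense. *)

From HB Require Import structures.
From mathcomp Require Import all_boot all_order all_algebra.
From mathcomp Require Import all_classical all_reals all_analysis.
Set Implicit Arguments. Unset Strict Implicit. Unset Printing Implicit Defensive.
Import Order.TTheory GRing.Theory Num.Theory.
Local Open Scope classical_set_scope.
Local Open Scope ring_scope.

Section Topology.
Variable T : topologicalType.

Lemma nowhere_dense_set0 : nowhere_dense (@set0 T).
Proof. by rewrite /nowhere_dense closure0 interior0. Qed.

Lemma closure_setC_closure_nowhere_dense (N : set T) :
  nowhere_dense N -> closure (~` closure N) = setT.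
Proof. by move=> nN; rewrite closure_setC nN setC0. Qed.

Lemma closure_setCUI_setT (W S : set T) : open W -> W `<=` closure S ->
  closure (~` W `|` (W `&` S)) = setT.
Proof.
move=> oW WS; apply/seteqP; split => // x _ B nB.
have [Wx|Wx] := pselect (W x); last first.
  by exists x; split; [left|exact: nbhs_singleton].
have nWB : nbhs x (W `&` B) by apply: filterI => //; exact: open_nbhs_nbhs.
have [z [Sz [Wz Bz]]] := WS x Wx _ nWB.
by exists z; split => //; right.
Qed.

Lemma closure_preimage_subset (U : topologicalType) (f : T -> U) (N : set U) :
  continuous f -> closure (f @^-1` N) `<=` f @^-1` closure N.
Proof.
move=> cf w cw B nB; have [v [Nv Bv]] := cw _ (cf w B nB).
by exists (f v).
Qed.

Lemma minimal_map_on (A : set T) (f : T -> T) :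
  minimal_map f -> minimal_on A f.
Proof.
by move=> mf x _ O oO [y [Oy _]]; exact: mf x O (ex_intro _ y Oy) oO.
Qed.

End Topology.

Section Orbits.
Variables (T : Type) (f : T -> T).

Lemma iter_cancel (g : T -> T) : cancel g f ->
  forall k x, iter k f (iter k g x) = x.
Proof. by move=> gK; elim=> [|k IH] x //; rewrite iterSr iterS gK. Qed.

Lemma iter_backward_orbit (u : nat -> T) : (forall n, f (u n.+1) = u n) ->
  forall k n, iter k f (u (n + k)%N) = u n.
Proof.
move=> hu; elim=> [|k IH] n; first by rewrite addn0.
by rewrite iterSr addnS hu IH.
Qed.

Lemma full_orbit_f x : full_orbit f (f x) = full_orbit f x.
Proof.
apply/seteqP; split => y [i [j e]].
  by exists i, j.+1; rewrite e iterSr.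
by exists i.+1, j; rewrite iterS e -iterS iterSr.
Qed.

Lemma full_orbit_iter x y k : full_orbit f x y -> full_orbit f x (iter k f y).
Proof.
move=> [i [j e]]; exists i, (k + j)%N.
by rewrite -iterD addnC iterD e -iterD.
Qed.

Lemma full_orbit_iter_self x k : full_orbit f x (iter k f x).
Proof. by exists 0%N, k. Qed.

Lemma full_orbit_iter_cancel (g : T -> T) x k :
  cancel g f -> full_orbit f x (iter k g x).
Proof. by move=> gK; exists k, 0%N; rewrite iter_cancel. Qed.

Section InjectiveAlongOrbit.
Variable x : T.
Hypothesis f_inj : forall a b, full_orbit f x a -> full_orbit f x b ->
  f a = f b -> a = b.

Lemma iter_inj_full_orbit i a b : full_orbit f x a -> full_orbit f x b ->
  iter i f a = iter i f b -> a = b.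
Proof.
move=> oa ob; elim: i => [//|i IH] /= e; apply: IH.
by apply: f_inj e; exact: full_orbit_iter.
Qed.

(* The two-sided orbit is s n = f^n x for n >= 0 and g^(-n) x for n < 0. *)
Lemma homeo_part_cancel (g : T -> T) : cancel g f -> homeo_part f x.
Proof.
move=> gK; pose s (n : int) := match n with
  | Posz k => iter k f x | Negz k => iter k.+1 g x end.
exists s; split => //.
  by case=> [k|[|k]] /=; rewrite ?addn1 ?gK ?subSS ?subn0.
apply/seteqP; split => [y [i [j e]]|]; last first.
  move=> _ [[k|k] _ <-]; first exact: full_orbit_iter_self.
  exact: full_orbit_iter_cancel.
have oy : full_orbit f x y by exists i, j.
have [ij|ji] := leqP i j.
  exists (Posz (j - i)) => //=.
  apply: (iter_inj_full_orbit (i := i) (full_orbit_iter_self _ _) oy).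
  by rewrite e -iterD subnKC.
have [k ek] : exists k, (i - j)%N = k.+1.
  by exists (i - j).-1; rewrite prednK ?subn_gt0.
exists (Negz k) => //.
apply: (iter_inj_full_orbit (i := i) (full_orbit_iter_cancel x k.+1 gK) oy).
by rewrite e -(subnKC (ltnW ji)) iterD ek iter_cancel.
Qed.

End InjectiveAlongOrbit.

Definition orbit_avoiding (Q : set T) : set T :=
  [set x | forall y, full_orbit f x y -> ~ Q y].

Lemma orbit_avoiding_f Q x : orbit_avoiding Q (f x) = orbit_avoiding Q x.
Proof. by rewrite /orbit_avoiding /= full_orbit_f. Qed.

Lemma image_orbit_avoiding (g : T -> T) Q : cancel g f ->
  f @` orbit_avoiding Q = orbit_avoiding Q.
Proof.
move=> gK; apply/seteqP; split => [_ [y Qy <-]|y Qy].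
  by rewrite orbit_avoiding_f.
by exists (g y); rewrite ?gK // -orbit_avoiding_f gK.
Qed.

Lemma preimage_orbit_avoiding Q : f @^-1` orbit_avoiding Q = orbit_avoiding Q.
Proof. by apply/seteqP; split => x /=; rewrite orbit_avoiding_f. Qed.

End Orbits.

Section CompactMinimal.
Variables (R : realType) (X : metricType R) (f : X -> X).
Hypotheses (cX : compact [set: X]) (cf : continuous f) (mf : minimal_map f).

Lemma closed_image (Y : set X) : closed Y -> closed (f @` Y).
Proof.
move=> cY; apply: compact_closed; first exact: metric_hausdorff.
apply: continuous_compact; first exact: continuous_subspaceT.
exact: (subclosed_compact cY cX).
Qed.

Lemma continuous_iter k : continuous (iter k f).
Proof.
elim: k => [|k IH] x /=; first exact: cvg_id.
change {for x, continuous (f \o iter k f)}.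
by apply: continuous_comp; [exact: IH | exact: cf].
Qed.

Lemma closed_backward_orbit_setT (u : nat -> X) (Y : set X) : closed Y ->
  (forall n, Y (u n)) -> (forall n, f (u n.+1) = u n) -> Y = setT.
Proof.
move=> cY Yu hu.
have [p [_ clp]] : [set: X] `&` cluster (u @ \oo) !=set0.
  by apply: cX => //; exact: filterT.
have orbit_p : forward_orbit f p `<=` Y.
  move=> _ [k _ <-]; apply: cY => B nB.
  have uk : (u @ \oo) (u @` [set n | (k <= n)%N]).
    by exists k => // n /= kn; exists n.
  have [_ [[n kn <-] Bn]] := clp _ _ uk (continuous_iter nB).
  exists (u (n - k)%N); split; first exact: Yu.
  by move: Bn; rewrite /= -{1}(subnK kn) iter_backward_orbit.
apply/seteqP; split => // x _; apply: contrapT => Yx.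
have [y [Yy [k _ yk]]] := @mf p (~` Y) (ex_intro _ x Yx) (closed_openC cY).
by apply: Yy; rewrite -yk; apply: orbit_p; exists k.
Qed.

Lemma minimal_surjective x : exists y, f y = x.
Proof.
apply: contrapT => nx.
have [y [fXy [k _ yk]]] := @mf (f x) (~` (f @` setT))
  (ex_intro _ x (fun '(ex_intro2 y _ e) => nx (ex_intro _ y e)))
  (closed_openC (closed_image closedT)).
by apply: fXy; rewrite -yk -iterSr; exists (iter k f x).
Qed.

(* Pick preimages inside Y repeatedly to build a backward orbit in Y. *)
Lemma closed_image_dense_setT (Y D : set X) : closed Y ->
  D `<=` f @` Y -> closure D = setT -> Y = setT.
Proof.
move=> cY DY cD.
have YX x : exists y, Y y /\ f y = x.
  have [y Yy <-] : (f @` Y) x.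
    by apply: (closed_image cY); apply: closureS DY _ _; rewrite cD.
  by exists y.
have [h hh] := choice YX; apply/seteqP; split => // x _.
have Yh n : Y (iter n.+1 h x) by case: (hh (iter n h x)).
rewrite (closed_backward_orbit_setT cY Yh) // => n.
by case: (hh (iter n.+1 h x)).
Qed.

Lemma nowhere_dense_preimage N : nowhere_dense N -> nowhere_dense (f @^-1` N).
Proof.
move=> nN; rewrite /nowhere_dense -[interior _]setCK.
suff -> : ~` interior (closure (f @^-1` N)) = setT by rewrite setCT.
apply: (closed_image_dense_setT _ _ (closure_setC_closure_nowhere_dense nN)).
  by rewrite closedC; exact: open_interior.
move=> z nz; have [w wz] := minimal_surjective z; exists w => // Uw; apply: nz.
by rewrite -wz; apply: closure_preimage_subset => //; exact: interior_subset.
Qed.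

(* The complement of O = f^-1 W \ closure N is a closed set whose image
   contains the dense set ~` W `|` (W `&` f N); so O is empty and f^-1 W lies
   in closure N. *)
Lemma nowhere_dense_image N : nowhere_dense N -> nowhere_dense (f @` N).
Proof.
move=> nN; apply/seteqP; split => // x Wx.
set W := interior (closure (f @` N)) in Wx.
pose O := f @^-1` W `&` ~` closure N.
have oO : open O.
  apply: openI; last exact/closed_openC/closed_closure.
  by apply: open_comp; [move=> y _; exact: cf | exact: open_interior].
have O0 y : ~ O y.
  have : ~` O = setT.
    apply: (closed_image_dense_setT _ _ (closure_setCUI_setT (open_interior _)
      (@interior_subset _ (closure (f @` N))))); first by rewrite closedC.
    move=> z [nz|[Wz [n Nn <-]]]; last first.
      by exists n => // -[_]; apply; exact: subset_closure.
    have [w wz] := minimal_surjective z.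
    by exists w => // -[Ww _]; apply: nz; rewrite -wz.
  by move/seteqP => [_ /(_ y I)].
have [w wx] := minimal_surjective x.
have nW : nbhs w (f @^-1` W).
  apply: cf; rewrite wx; apply: open_nbhs_nbhs.
  by split => //; exact: open_interior.
have : interior (closure N) w.
  by apply: filterS nW => y Wy; apply: contrapT => ny; exact: (O0 y).
by rewrite nN.
Qed.

Lemma nowhere_dense_iter_image k N : nowhere_dense N ->
  nowhere_dense (iter k f @` N).
Proof.
elim: k N => [|k IH] N nN; first by rewrite image_id.
have -> : iter k.+1 f @` N = iter k f @` (f @` N).
  by rewrite image_comp; congr image; apply/funext => y; exact: iterSr.
exact/IH/nowhere_dense_image.
Qed.

Lemma nowhere_dense_iter_preimage k N : nowhere_dense N ->
  nowhere_dense (iter k f @^-1` N).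
Proof.
elim: k N => [|k IH] N nN //.
exact: (IH (f @^-1` N) (nowhere_dense_preimage nN)).
Qed.

Definition wide_fibre (n : nat) : set X :=
  [set x | exists y z, [/\ f y = x, f z = x & ~ ball y (n.+1%:R^-1 : R) z]].

(* Every point of W in wide_fibre n has a preimage outside ball y (e / 2),
   so the complement of O is a closed set whose image is dense. *)
Lemma nowhere_dense_wide_fibre n : nowhere_dense (wide_fibre n).
Proof.
apply/seteqP; split => // x Wx.
set W := interior (closure (wide_fibre n)) in Wx.
have oW : open W := open_interior _.
have [_ [[y [z [<- fzy yz]]] Wfy]] : wide_fibre n `&` W !=set0.
  exact: interior_subset Wx W (open_nbhs_nbhs (conj oW Wx)).
pose e : R := n.+1%:R^-1.
have e2 : 0 < e / 2 by rewrite divr_gt0 // invr_gt0 ltr0n.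
pose O := f @^-1` W `&` interior (ball y (e / 2)).
have : (~` O) y; last by apply; split; [|exact: nbhsx_ballx].
have -> : ~` O = setT.
  apply: (closed_image_dense_setT _ _ (closure_setCUI_setT oW
    (@interior_subset _ (closure (wide_fibre n))))).
    by rewrite closedC; apply: openI; [exact: open_comp | exact: open_interior].
  move=> c [nc|[Wc [y' [z' [fy' fz' y'z']]]]].
    have [w wc] := minimal_surjective c.
    by exists w => // -[Ww _]; apply: nc; rewrite -wc.
  have [Oy'|] := pselect (O y'); last by exists y'.
  have [Oz'|] := pselect (O z'); last by exists z'.
  exfalso; apply: y'z'; rewrite -/e [e]splitr.
  exact: ball_triangle (ball_sym (interior_subset Oy'.2))
    (interior_subset Oz'.2).
by [].
Qed.

Lemma preimage_uniq a b : (forall n, ~ wide_fibre n (f a)) ->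
  f a = f b -> a = b.
Proof.
move=> nW fab; apply: contrapT => nab.
have d0 : 0 < mdist a b by rewrite mdist_gt0; apply/eqP.
have [n _ /(_ n (leqnn _)) dn] := near_infty_natSinv_lt (PosNum d0).
apply: (nW n); exists a, b; split => //.
by rewrite ballEmdist /=; apply/negP; rewrite -leNgt ltW.
Qed.

Definition finv : X -> X := projT1 (choice minimal_surjective).

Lemma finvK : cancel finv f.
Proof. exact: projT2 (choice minimal_surjective). Qed.

(* Every cluster point q of finv along nbhs x satisfies f q = x, hence
   q = finv x; compactness then gives convergence. *)
Lemma finv_continuous x : (forall n, ~ wide_fibre n x) ->
  {for x, continuous finv}.
Proof.
move=> nW.
have cluster_finv q : cluster (finv @ nbhs x) q -> q = finv x.
  move=> clq; have fq : f q = x.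
    apply: metric_hausdorff => B C nB nC.
    have fC : (finv @ nbhs x) (finv @` C).
      by apply: filterS nC => c Cc; exists c.
    have [_ [[c Cc <-] Bc]] := clq _ _ fC (cf nB).
    by exists c; split => //; move: Bc; rewrite /= finvK.
  by apply: preimage_uniq; rewrite fq ?finvK.
apply: (@compact_cluster_set1 X (finv x) (finv @ nbhs x) setT
  (@metric_hausdorff _ X) cX filterT _ filterT).
apply/seteqP; split => [q /cluster_finv //|_ ->].
have [q [_ clq]] := @cX (finv @ nbhs x) _ filterT.
by rewrite -(cluster_finv q clq).
Qed.

Lemma minimal_map_finv : minimal_map finv.
Proof.
move=> x O [y Oy] oO.
have clX : closure (forward_orbit finv x) = setT.
  apply: (closed_backward_orbit_setT (u := fun n => iter n finv x)
    (@closed_closure _ _)) => n; last by rewrite iterS finvK.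
  by apply: subset_closure; exists n.
have : closure (forward_orbit finv x) y by rewrite clX.
by move/(_ O (open_nbhs_nbhs (conj oO Oy))) => [z [oz Oz]]; exists z.
Qed.

Lemma residual_orbit_avoiding (N : nat -> set X) :
  (forall n, nowhere_dense (N n)) ->
  residual (orbit_avoiding f (\bigcup_n N n)).
Proof.
move=> nN.
pose G (t : nat * nat * nat) := let: (i, j, n) := t in
  iter j f @^-1` (iter i f @` N n).
exists (fun m => if unpickle m is Some t then G t else set0); split.
  move=> m; case: unpickle => [[[i j] n]|] /=; last exact: nowhere_dense_set0.
  exact/nowhere_dense_iter_preimage/nowhere_dense_iter_image.
apply/seteqP; split => x.
  move=> Ax [m _]; case: unpickle => [[[i j] n]|] //= [y Ny e].
  by apply: (Ax y); [exists i, j | exists n].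
move=> Ax y [i [j e]] [n _ Ny]; apply: Ax.
by exists (pickle (i, j, n)) => //; rewrite pickleK; exists y.
Qed.

Section AvoidingWideFibres.
Variable Q : set X.
Hypothesis wide_fibreQ : forall n, wide_fibre n `<=` Q.

Lemma orbit_avoiding_wide_fibre x y n : orbit_avoiding f Q x ->
  full_orbit f x y -> ~ wide_fibre n y.
Proof. by move=> Ax oy /wide_fibreQ; exact: Ax. Qed.

Lemma orbit_avoiding_homeo_part : orbit_avoiding f Q `<=` homeo_part f.
Proof.
move=> x Ax; apply: (homeo_part_cancel _ finvK) => a b oa ob.
by apply: preimage_uniq => n; apply: orbit_avoiding_wide_fibre Ax _;
  exact: (full_orbit_iter 1 oa).
Qed.

Lemma finv_f_orbit_avoiding x : orbit_avoiding f Q x -> finv (f x) = x.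
Proof.
move=> Ax; apply: preimage_uniq; rewrite finvK // => n.
exact: orbit_avoiding_wide_fibre Ax (full_orbit_iter_self f x 1).
Qed.

Lemma continuous_within_finv : {within orbit_avoiding f Q, continuous finv}.
Proof.
apply: continuous_in_subspaceT => x /set_mem Ax; apply: finv_continuous => n.
exact: orbit_avoiding_wide_fibre Ax (full_orbit_iter_self f x 0).
Qed.

End AvoidingWideFibres.

End CompactMinimal.

Theorem lemma5 (R : realType) (X : metricType R) (f : X -> X)
    (P : set X) :
  compact [set: X] ->
  continuous f ->
  minimal_map f ->
  residual P ->
  exists RR : set X,
    [/\ RR `<=` P `&` homeo_part f, residual RR,
        f @` RR = RR, f @^-1` RR = RR &
        exists g : X -> X,
          [/\ (forall x, RR x -> g (f x) = x /\ f (g x) = x),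
              g @` RR `<=` RR,
              {within RR, continuous f} /\ {within RR, continuous g},
              minimal_on RR f & minimal_on RR g]].
Proof.
move=> cX cf mf [F [nF ->]].
pose N n := if odd n then F n./2 else wide_fibre f n./2.
have wide_fibreN n : wide_fibre f n `<=` \bigcup_n N n.
  by move=> x Wx; exists n.*2 => //; rewrite /N odd_double doubleK.
pose RR := orbit_avoiding f (\bigcup_n N n).
have gK := finvK cX cf mf.
exists RR; split.
- move=> x Ax; split.
    move=> [n _ Fn]; apply: (Ax x (full_orbit_iter_self f x 0)).
    by exists n.*2.+1 => //; rewrite /N /= odd_double uphalf_double.
  exact: (orbit_avoiding_homeo_part cX cf mf wide_fibreN Ax).
- apply: (residual_orbit_avoiding cX cf mf) => n; rewrite /N; case: odd.
    exact: nF.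
  exact: nowhere_dense_wide_fibre.
- exact: (image_orbit_avoiding _ gK).
- exact: preimage_orbit_avoiding.
exists (finv cX cf mf); split.
- move=> x Ax; split; last exact: gK.
  exact: (finv_f_orbit_avoiding cX cf mf wide_fibreN Ax).
- by move=> _ [y Ay <-]; rewrite /RR -orbit_avoiding_f gK.
- split; first exact: continuous_subspaceT.
  exact: continuous_within_finv wide_fibreN.
- exact: minimal_map_on.
exact/minimal_map_on/(minimal_map_finv cX cf mf).
Qed.
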